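(* Let $N\in\mathbb{N}$, $a\ge0$, $b>0$, $\alpha:=a+b-1$, $\beta:=b-1$, and let $z_1\le\dots\le z_N$ be the ordered zeros of the Jacobi polynomial $P_N^{(\alpha,\beta)}$. Let $\tilde S=(\tilde s_{i,j})_{i,j=1,\dots,N}$ be the matrix with $$\tilde s_{j,j}=4\sum_{l\ne j}\frac{1-z_j^2}{(z_j-z_l)^2}+2(a+b)\frac{1+z_j}{1-z_j}+2b\frac{1-z_j}{1+z_j},\qquad \tilde s_{i,j}=\frac{-4\sqrt{(1-z_j^2)(1-z_i^2)}}{(z_i-z_j)^2}\ (i\ne j).$$ Then $v_1:=(\sqrt{1-z_1^2},\dots,\sqrt{1-z_N^2})^T$ is an eigenvector of $\tilde S$ with eigenvalue $\lambda_1=2(2N+\alpha+\beta)$.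
   Context: $P_N^{(\alpha,\beta)}$ denotes the classical Jacobi polynomial of degree $N$, orthogonal on $]-1,1[$ with respect to the weight $(1-x)^\alpha(1+x)^\beta$; its zeros are simple and lie in $]-1,1[$. *)

From HB Require Import structures.
From mathcomp Require Import all_boot all_order all_algebra.
From mathcomp Require Import reals.
Set Implicit Arguments. Unset Strict Implicit. Unset Printing Implicit Defensive.
Import Order.TTheory GRing.Theory Num.Theory.
Local Open Scope ring_scope.

Definition gbinom {R : realType} (x : R) (k : nat) : R :=
  (\prod_(i < k) (x - i%:R)) / (k`!)%:R.

Definition jacobi {R : realType} (N : nat) (al be : R) : {poly R} :=
  \sum_(k < N.+1)
     (gbinom (N%:R + al) (N - k) * gbinom (N%:R + be) k) *:
       (((2^-1) *: ('X - 1)) ^+ k * ((2^-1) *: ('X + 1)) ^+ (N - k)).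

Definition Stilde {R : realType} (N : nat) (a b : R) (z : 'I_N -> R) : 'M[R]_N :=
  \matrix_(i < N, j < N)
    if i == j then
      4 * (\sum_(l < N | l != j) (1 - z j ^+ 2) / (z j - z l) ^+ 2)
      + 2 * (a + b) * (1 + z j) / (1 - z j)
      + 2 * b * (1 - z j) / (1 + z j)
    else
      - 4 * Num.sqrt ((1 - z j ^+ 2) * (1 - z i ^+ 2)) / (z i - z j) ^+ 2.

Definition v1 {R : realType} (N : nat) (z : 'I_N -> R) : 'cV[R]_N :=
  \col_(i < N) Num.sqrt (1 - z i ^+ 2).

From HB Require Import structures.
From mathcomp Require Import all_boot all_order all_algebra.
From mathcomp Require Import reals ring lra.
Import Order.TTheory GRing.Theory Num.Theory.
Local Open Scope ring_scope.
Set Implicit Arguments. Unset Strict Implicit.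

(* The Jacobi polynomial y = P_N^(al,be) satisfies the differential equation
     (1 - x^2) y'' + (be - al - (al + be + 2) x) y' + N (N + al + be + 1) y = 0,
   which can be checked termwise on its expansion in the basis (x-1)^k (x+1)^(N-k).
   At a zero z_j of a polynomial of degree N with distinct zeros z_1, ..., z_N, the
   logarithmic derivative gives y''(z_j) = 2 y'(z_j) S_j with S_j = sum_(l <> j) 1/(z_j - z_l),
   so the equation yields Stieltjes' relation
     2 (1 - z_j^2) S_j = (al + be + 2) z_j + al - be.
   In row j of S~ v_1 the off-diagonal entries combine with the diagonal sum into
   4 ((N - 1) - 2 z_j S_j) sqrt(1 - z_j^2), and the relation turns the row into
   2 (2N + al + be) sqrt(1 - z_j^2). *)

Section JacobiOperator.
Variable R : comNzRingType.
Implicit Types (al be : R) (p q : {poly R}).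

Definition jacobi_basis k m : {poly R} := ('X - 1) ^+ k * ('X + 1) ^+ m.

Definition jacobi_op al be n p : {poly R} :=
  (1 - 'X ^+ 2) * p^`()^`() + ((be - al)%:P - (al + be + 2)%:P * 'X) * p^`()
  + (n%:R * (n%:R + al + be + 1))%:P * p.

Lemma jacobi_opD al be n : {morph jacobi_op al be n : p q / p + q}.
Proof. by move=> p q; rewrite /jacobi_op !derivD; ring. Qed.

Lemma jacobi_op0 al be n : jacobi_op al be n 0 = 0.
Proof. by rewrite /jacobi_op !derivC; ring. Qed.

Lemma jacobi_opZ al be n c p : jacobi_op al be n (c *: p) = c *: jacobi_op al be n p.
Proof. by rewrite /jacobi_op !derivZ -!mul_polyC; ring. Qed.

(* For [k = 0] (resp. [m = 0]) the truncated [k.-1] (resp. [m.-1]) is harmless: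
   its coefficient vanishes. *)
Lemma jacobi_op_basis al be k m :
  jacobi_op al be (k + m) (jacobi_basis k m)
  = (2 * m%:R * (m%:R + be))%:P * jacobi_basis k m.-1
    - (2 * k%:R * (k%:R + al))%:P * jacobi_basis k.-1 m.
Proof.
rewrite /jacobi_op /jacobi_basis !(derivM, deriv_exp, derivMn, derivE) /=.
case: k => [|[|k]]; case: m => [|[|m]]; rewrite /= ?mulr0n ?exprS; ring.
Qed.

Lemma size_jacobi_basis k m : size (jacobi_basis k m) = (k + m).+1.
Proof.
have XaddE : 'X + 1 = 'X - (-1)%:P :> {poly R} by rewrite polyCN opprK.
rewrite /jacobi_basis XaddE -polyC1 size_Mmonic ?monic_exp ?monicXsubC //.
  by rewrite !size_exp_XsubC addSn addnS.
by rewrite monic_neq0 ?monic_exp ?monicXsubC.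
Qed.

End JacobiOperator.

Arguments jacobi_basis {R} k m.

Section SimpleRoots.
Variable F : fieldType.

Lemma horner_deriv_prod_XsubC (I : Type) (r : seq I) (P : pred I) (c : I -> F) x :
    (forall i, P i -> x != c i) ->
  (\prod_(i <- r | P i) ('X - (c i)%:P))^`().[x]
  = (\prod_(i <- r | P i) (x - c i)) * \sum_(i <- r | P i) (x - c i)^-1.
Proof.
move=> xPc; elim: r => [|i r IHr]; first by rewrite !big_nil derivE horner0 mulr0.
rewrite !big_cons; case: ifP => // Pi.
have xci : x - c i != 0 by rewrite subr_eq0 xPc.
rewrite derivM derivXsubC hornerD !hornerM IHr hornerXsubC horner_prod hornerC.
under eq_bigr do rewrite hornerXsubC.
by field.
Qed.

Lemma horner_deriv2_simple_root N (Q : {poly F}) (z : 'I_N -> F) j :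
    Q != 0 -> (size Q <= N.+1)%N -> injective z -> (forall i, root Q (z i)) ->
  Q^`().[z j] != 0 /\
  Q^`()^`().[z j] = 2 * Q^`().[z j] * \sum_(i < N | i != j) (z j - z i)^-1.
Proof.
move=> Q_neq0 sizeQ z_inj Qz.
set zs := [seq z i | i <- index_enum 'I_N].
have zs_uniq : uniq zs by rewrite map_inj_uniq ?index_enum_uniq.
have Qzs : all (root Q) zs by apply/allP => _ /mapP[i _ ->].
have sizeQE : size Q = (size zs).+1.
  apply/eqP; rewrite eqn_leq (max_poly_roots Q_neq0 Qzs zs_uniq) andbT.
  by rewrite size_map /index_enum -enumT size_enum_ord.
set r := \prod_(i < N | i != j) ('X - (z i)%:P).
have QE : Q = lead_coef Q *: (('X - (z j)%:P) * r).
  by rewrite {1}(all_roots_prod_XsubC sizeQE Qzs _) ?uniq_rootsE // big_map (bigD1 j).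
have zji i : i != j -> z j != z i by move=> ij; rewrite (inj_eq z_inj) eq_sym.
have rz : r.[z j] = \prod_(i < N | i != j) (z j - z i).
  by rewrite horner_prod; under eq_bigr do rewrite hornerXsubC.
have rz_neq0 : r.[z j] != 0 by rewrite rz; apply/prodf_neq0 => i /zji; rewrite subr_eq0.
have drz : r^`().[z j] = r.[z j] * \sum_(i < N | i != j) (z j - z i)^-1.
  by rewrite rz horner_deriv_prod_XsubC.
clearbody r.
have dQz : Q^`().[z j] = lead_coef Q * r.[z j].
  rewrite {1}QE derivZ derivM derivXsubC.
  by rewrite hornerZ hornerD !hornerM hornerXsubC hornerC subrr; ring.
rewrite dQz; split; first by rewrite mulf_neq0 ?lead_coef_eq0.
rewrite {1}QE derivZ derivM derivXsubC mul1r derivZ derivD derivM derivXsubC.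
by rewrite hornerZ !hornerD !hornerM hornerXsubC hornerC subrr drz; ring.
Qed.

Lemma sum_sqrB_div_sqr_dist N (z : 'I_N -> F) j : injective z ->
  \sum_(l < N | l != j) (z l ^+ 2 - z j ^+ 2) / (z j - z l) ^+ 2
  = N%:R - 1 - 2 * z j * \sum_(l < N | l != j) (z j - z l)^-1.
Proof.
move=> z_inj; have sum1 : \sum_(l < N) (1 : F) = N%:R by rewrite sumr_const card_ord.
rewrite (bigD1 j) //= in sum1; rewrite -sum1 addrC addrK mulr_sumr -sumrB.
apply: eq_bigr => l lj; have zjl : z j - z l != 0 by rewrite subr_eq0 (inj_eq z_inj) eq_sym.
by field.
Qed.

End SimpleRoots.

Section RealJacobi.
Variable R : realType.
Implicit Types (al be : R) (N : nat).

Lemma gbinomS (x : R) k : gbinom x k.+1 * k.+1%:R = gbinom x k * (x - k%:R).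
Proof.
rewrite /gbinom big_ord_recr /= factS natrM.
have kS_neq0 : (k.+1%:R : R) != 0 by rewrite pnatr_eq0.
have fact_neq0 : ((k`!)%:R : R) != 0 by rewrite pnatr_eq0 -lt0n fact_gt0.
by field; rewrite fact_neq0 nat1r kS_neq0.
Qed.

Lemma gbinom_gt0 (x : R) k : k%:R - 1 < x -> 0 < gbinom x k.
Proof.
move=> kx; rewrite /gbinom divr_gt0 ?ltr0n ?fact_gt0 // prodr_gt0 // => i _.
rewrite subr_gt0; apply: le_lt_trans kx.
by rewrite lerBrDr natr1 ler_nat.
Qed.

Definition jacobi_coef N (al be : R) k :=
  gbinom (N%:R + al) (N - k) * gbinom (N%:R + be) k.

Lemma jacobi_coefS N al be k : (k < N)%N ->
  jacobi_coef N al be k.+1 * (k.+1%:R * (k.+1%:R + al))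
  = jacobi_coef N al be k * ((N - k)%:R * ((N - k)%:R + be)).
Proof.
move=> ltkN; rewrite /jacobi_coef -(subnSK ltkN); set j := (N - k.+1)%N.
have NE : (N%:R : R) = j%:R + k.+1%:R by rewrite -natrD subnK.
have := gbinomS (N%:R + al) j; have := gbinomS (N%:R + be) k.
rewrite NE -!natr1; set u := gbinom _ k.+1; set u' := gbinom _ j.+1.
set v := gbinom _ k; set v' := gbinom _ j => Eu Eu'.
rewrite [LHS](_ : _ = v' * (k%:R + 1 + al) * (u * (k%:R + 1))); last by ring.
rewrite [RHS](_ : _ = v * (j%:R + 1 + be) * (u' * (j%:R + 1))); last by ring.
by rewrite Eu Eu'; ring.
Qed.

Lemma jacobiE N al be :
  jacobi N al be = 2 ^- N *: \sum_(k < N.+1) jacobi_coef N al be k *: jacobi_basis k (N - k).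
Proof.
rewrite /jacobi scaler_sumr; apply: eq_bigr => k _.
rewrite !exprZn -scalerAl -scalerAr !scalerA -mulrA -exprD subnKC ?leq_ord //.
by rewrite exprVn mulrC.
Qed.

Lemma jacobi_op_jacobi N al be : jacobi_op al be N (jacobi N al be) = 0.
Proof.
rewrite jacobiE jacobi_opZ.
rewrite (big_morph (jacobi_op al be N) (jacobi_opD al be N) (jacobi_op0 al be N)).
have opE (k : 'I_N.+1) : jacobi_op al be N (jacobi_basis k (N - k))
    = (2 * (N - k)%:R * ((N - k)%:R + be)) *: jacobi_basis k (N - k).-1
      - (2 * k%:R * (k%:R + al)) *: jacobi_basis k.-1 (N - k).
  by rewrite -{1}(subnKC (leq_ord k)) jacobi_op_basis !mul_polyC.
under eq_bigr do rewrite jacobi_opZ opE scalerBr !scalerA.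
rewrite sumrB big_ord_recr big_ord_recl /= subnn !(mulr0, mul0r, scale0r, addr0, sub0r).
(* The two sums telescope after the shift [k = i.+1]. *)
rewrite add0r -sumrB big1 ?scaler0 // => i _.
rewrite /bump /= add1n subnS -scalerBl [_ - _](_ : _ = 0) ?scale0r //.
move: (jacobi_coefS al be (ltn_ord i)).
move: (jacobi_coef N al be i) (jacobi_coef N al be i.+1) => c c' coefE.
by apply/eqP; rewrite subr_eq0 -!mulrA (mulrCA c) (mulrCA c') coefE.
Qed.

Lemma gbinom0 (x : R) : gbinom x 0 = 1.
Proof. by rewrite /gbinom big_ord0 fact0 divr1. Qed.

Lemma horner_jacobi1 N al be : (jacobi N al be).[1] = gbinom (N%:R + al) N.
Proof.
have basis1 k m : (jacobi_basis k m).[1] = 0 ^+ k * 2 ^+ m :> R.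
  by rewrite hornerM !horner_exp !hornerE subrr.
rewrite jacobiE hornerZ horner_sum big_ord_recl big1 => [|i _]; last first.
  by rewrite hornerZ basis1 expr0n /= mul0r mulr0.
rewrite addr0 hornerZ basis1 expr0 mul1r /jacobi_coef !subn0 gbinom0 mulr1.
by rewrite mulrCA mulVf ?mulr1 // expf_neq0 // pnatr_eq0.
Qed.

Lemma jacobi_neq0 N al be : -1 < al -> jacobi N al be != 0.
Proof.
move=> al_gt; have : 0 < (jacobi N al be).[1] by rewrite horner_jacobi1 gbinom_gt0 // ltrD2l.
by apply: contraTneq => ->; rewrite horner0 ltxx.
Qed.

Lemma size_jacobi N al be : (size (jacobi N al be) <= N.+1)%N.
Proof.
rewrite jacobiE; apply: leq_trans (size_scale_leq _ _) _.
apply: leq_trans (size_sum _ _ _) _; apply/bigmax_leqP => k _.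
by apply: leq_trans (size_scale_leq _ _) _; rewrite size_jacobi_basis subnKC ?leq_ord.
Qed.

Lemma jacobi_root_relation N al be (z : 'I_N -> R) j :
    -1 < al -> injective z -> (forall i, root (jacobi N al be) (z i)) ->
  2 * (1 - z j ^+ 2) * \sum_(i < N | i != j) (z j - z i)^-1
  = (al + be + 2) * z j + al - be.
Proof.
move=> al_gt z_inj Pz.
have [dP_neq0 d2P] :=
  horner_deriv2_simple_root j (jacobi_neq0 N be al_gt) (size_jacobi N al be) z_inj Pz.
have := congr1 (horner^~ (z j)) (jacobi_op_jacobi N al be).
rewrite /jacobi_op !(hornerD, hornerN, hornerM, hornerC, hornerX, horner_exp).
rewrite (rootP (Pz j)) d2P => opz; apply/eqP; rewrite -subr_eq0; apply/eqP.
by apply: (mulfI dP_neq0); rewrite mulr0 -[RHS]opz; ring.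
Qed.

Lemma Stilde_v1_row N (a b : R) (z : 'I_N -> R) j :
    injective z -> (forall i, z i ^+ 2 <= 1) ->
  (Stilde a b z *m v1 z) j 0
  = v1 z j 0 * (4 * (N%:R - 1 - 2 * z j * \sum_(i < N | i != j) (z j - z i)^-1)
                + 2 * (a + b) * (1 + z j) / (1 - z j) + 2 * b * (1 - z j) / (1 + z j)).
Proof.
move=> z_inj z_sqr_le1; have z_nneg i : 0 <= 1 - z i ^+ 2 by rewrite subr_ge0.
rewrite -sum_sqrB_div_sqr_dist // !mxE (bigD1 j) //= !mxE eqxx.
rewrite [in RHS](eq_bigr (fun l => (1 - z j ^+ 2) / (z j - z l) ^+ 2
                                 - (1 - z l ^+ 2) / (z j - z l) ^+ 2)) => [|l _]; last by ring.
set w := Num.sqrt (1 - z j ^+ 2).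
rewrite [X in _ + X = _]
  (eq_bigr (fun i => - 4 * w * ((1 - z i ^+ 2) / (z j - z i) ^+ 2))) => [|i ij].
  by rewrite sumrB -[X in _ + X = _]mulr_sumr; ring.
rewrite !mxE eq_sym (negbTE ij) sqrtrM // -[in RHS](sqr_sqrtr (z_nneg i)) /w; ring.
Qed.

End RealJacobi.

Unset Implicit Arguments.

Theorem lemma3p3 (R : realType) (N : nat) (a b : R) (z : 'I_N -> R) :
  (0 < N)%N -> 0 <= a -> 0 < b ->
  (* z_1 < ... < z_N are the (simple) zeros of P_N^{(a+b-1, b-1)}, all in ]-1,1[ *)
  (forall i j : 'I_N, (i < j)%N -> z i < z j) ->
  (forall i, root (jacobi N (a + b - 1) (b - 1)) (z i)) ->
  (forall i, -1 < z i < 1) ->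
  v1 z != 0 /\
  Stilde a b z *m v1 z
    = (2 * (2 * N%:R + (a + b - 1) + (b - 1))) *: v1 z.
Proof.
move=> N_gt0 a_ge0 b_gt0 z_lt z_root z_in.
have z_inj : injective z.
  by move=> i k zik; have [/z_lt|/z_lt|/val_inj] := ltngtP i k; rewrite ?zik ?ltxx.
have z_sqr_lt1 i : z i ^+ 2 < 1.
  by rewrite -real_normK ?num_real // expr_lt1 // ltr_norml.
split.
  apply/eqP => /matrixP/(_ (Ordinal N_gt0) 0)/eqP; rewrite !mxE sqrtr_eq0.
  by rewrite subr_le0 leNgt z_sqr_lt1.
have al_gt : -1 < a + b - 1 by lra.
apply/matrixP => j k; rewrite ord1 Stilde_v1_row // => [|i]; last exact/ltW.
have := jacobi_root_relation j al_gt z_inj z_root.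
set S := \sum_(i < N | i != j) _ => rel.
have [zj_gt zj_lt] : -1 < z j /\ z j < 1 by apply/andP.
have zj_sub : 1 - z j != 0 by rewrite subr_eq0 gt_eqF.
have zj_add : 1 + z j != 0 by apply: lt0r_neq0; lra.
have zj_sqr : 1 - z j ^+ 2 != 0 by rewrite subr_eq0 gt_eqF.
have SE : S = ((a + 2 * b) * z j + a) / (2 * (1 - z j ^+ 2)).
  have two_neq0 : (2 : R) != 0 by rewrite pnatr_eq0.
  by apply: (mulfI (mulf_neq0 two_neq0 zj_sqr)); rewrite rel; field.
rewrite [RHS]mxE SE [RHS]mulrC; congr (_ * _).
by field; rewrite zj_add zj_sub zj_sqr.
Qed.
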